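(* Let $X$ be a uniformly smooth Banach space, let $S\subset X$ be a nonempty bounded set, and let $a\in\operatorname{conv} S$. Then there exists a sequence $\{x_i\}_{i=1}^\infty\subset S$ such that, for every $k\in\mathbb{N}$, the vector $a_k=\frac1k\sum_{i=1}^k x_i$ satisfies $$\|a-a_k\|\le \frac{2e^2}{k\,\rho_X^{-1}(1/k)}\,\operatorname{diam} S .$$
   Context: The modulus of smoothness of a Banach space $X$ is $\rho_X(\tau)=\sup\{\tfrac12(\|x+\tau y\|+\|x-\tau y\|)-1 : \|x\|=\|y\|=1\}$ for $\tau\ge 0$. $X$ is uniformly smooth if $\rho_X(t)=o(t)$ as $t\to0$. The function $\rho_X$ is convex, strictly increasing and continuous on $[0,\infty)$, with $\rho_X(0)=0$, and it satisfies $\sqrt{1+\tau^2}-1\le\rho_X(\tau)$. Consequently it is a bijection of $[0,\infty)$ onto itself, and $\rho_X^{-1}$ denotes its inverse function. $\operatorname{conv} S$ is the convex hull of $S$, and $\operatorname{diam} S=\sup_{x,y\in S}\|x-y\|$. *)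

From Stdlib Require Import Reals Classical ClassicalEpsilon.
Open Scope R_scope.

Record NormedSpace := {
  carrier :> Type;
  vzero : carrier;
  vadd : carrier -> carrier -> carrier;
  vopp : carrier -> carrier;
  vscal : R -> carrier -> carrier;
  vnorm : carrier -> R;
  vadd_assoc : forall x y z, vadd x (vadd y z) = vadd (vadd x y) z;
  vadd_comm : forall x y, vadd x y = vadd y x;
  vadd_0 : forall x, vadd x vzero = x;
  vadd_opp : forall x, vadd x (vopp x) = vzero;
  vscal_1 : forall x, vscal 1 x = x;
  vscal_assoc : forall a b x, vscal a (vscal b x) = vscal (a * b) x;
  vscal_distr_v : forall a x y, vscal a (vadd x y) = vadd (vscal a x) (vscal a y);
  vscal_distr_s : forall a b x, vscal (a + b) x = vadd (vscal a x) (vscal b x);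
  vnorm_nonneg : forall x, 0 <= vnorm x;
  vnorm_eq0 : forall x, vnorm x = 0 -> x = vzero;
  vnorm_scal : forall a x, vnorm (vscal a x) = Rabs a * vnorm x;
  vnorm_triangle : forall x y, vnorm (vadd x y) <= vnorm x + vnorm y
}.

Arguments vzero {n}.
Arguments vadd {n}.
Arguments vopp {n}.
Arguments vscal {n}.
Arguments vnorm {n}.

Definition vsub {X : NormedSpace} (x y : X) : X := vadd x (vopp y).

Definition complete (X : NormedSpace) : Prop :=
  forall u : nat -> X,
    (forall eps, 0 < eps -> exists N, forall m n, (N <= m)%nat -> (N <= n)%nat ->
        vnorm (vsub (u m) (u n)) < eps) ->
    exists l : X, forall eps, 0 < eps -> exists N, forall n, (N <= n)%nat ->
        vnorm (vsub (u n) l) < eps.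

(* Supremum of a set of reals (the least upper bound when the set is nonempty
   and bounded above; 0 otherwise, a case never used below). *)
Definition sup_R (E : R -> Prop) : R :=
  match excluded_middle_informative (bound E /\ exists x, E x) with
  | left H => proj1_sig (completeness E (proj1 H) (proj2 H))
  | right _ => 0
  end.

Definition rho (X : NormedSpace) (tau : R) : R :=
  sup_R (fun r => exists x y : X, vnorm x = 1 /\ vnorm y = 1 /\
     r = (vnorm (vadd x (vscal tau y)) + vnorm (vsub x (vscal tau y))) / 2 - 1).

Definition rho_inv (X : NormedSpace) (s : R) : R :=
  epsilon (inhabits 0) (fun t => 0 <= t /\ rho X t = s).

Definition uniformly_smooth (X : NormedSpace) : Prop :=
  forall eps, 0 < eps -> exists delta, 0 < delta /\
    forall t, 0 < t < delta -> Rabs (rho X t) <= eps * t.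

Fixpoint vsum {X : NormedSpace} (f : nat -> X) (n : nat) : X :=
  match n with
  | O => vzero
  | S m => vadd (vsum f m) (f m)
  end.

Fixpoint rsum (w : nat -> R) (n : nat) : R :=
  match n with
  | O => 0
  | S m => rsum w m + w m
  end.

Definition conv {X : NormedSpace} (S : X -> Prop) (a : X) : Prop :=
  exists (n : nat) (w : nat -> R) (p : nat -> X),
    (forall i, (i < n)%nat -> 0 <= w i /\ S (p i)) /\
    rsum w n = 1 /\
    a = vsum (fun i => vscal (w i) (p i)) n.

Definition bounded_set {X : NormedSpace} (S : X -> Prop) : Prop :=
  exists M, forall x, S x -> vnorm x <= M.

Definition diam {X : NormedSpace} (S : X -> Prop) : R :=
  sup_R (fun r => exists x y, S x /\ S y /\ r = vnorm (vsub x y)).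

(* Greedy averaging.  Write E_k = k a - (x_0 + ... + x_(k-1)) for the error after k steps.
   Since a is a convex combination of points p_i of S, E_k is the same convex combination
   of the vectors E_k - (a - p_i), so some x_k in S satisfies |E_k| <= |E_k - (a - x_k)|.
   For such a choice the definition of rho gives
     |E_k + v| + |E_k - v| <= 2 |E_k| (1 + rho(|v| / |E_k|)),   v = a - x_k, |v| <= diam S,
   hence |E_(k+1)| <= |E_k| + 2 |E_k| rho(|v| / |E_k|).  Fix N and tau = rho^-1(1/N).  As long
   as |E_k| >= diam S / tau, convexity of rho bounds the increment by 2 diam S / (tau N);
   below that threshold |E_(k+1)| <= diam S / tau + diam S.  After N steps
   |E_N| <= 3 diam S / tau + diam S, and dividing by N gives the bound. *)
From Stdlib Require Import Reals Lra Lia Psatz Classical ClassicalEpsilon.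
Open Scope R_scope.

Section VectorAlgebra.
Context {X : NormedSpace}.
Implicit Types x y u v p : X.

Lemma vadd0l x : vadd vzero x = x.
Proof. rewrite vadd_comm. apply vadd_0. Qed.

Lemma vadd_cancel_l (a b c : X) : vadd a b = vadd a c -> b = c.
Proof.
  intro H. rewrite <- (vadd0l b), <- (vadd0l c), <- (vadd_opp X a),
    (vadd_comm X a (vopp a)), <- !vadd_assoc, H. reflexivity.
Qed.

Lemma vscal0 x : vscal 0 x = vzero.
Proof.
  apply (vadd_cancel_l (vscal 0 x)).
  rewrite vadd_0, <- vscal_distr_s, Rplus_0_l. reflexivity.
Qed.

Lemma voppE x : vopp x = vscal (-1) x.
Proof.
  apply (vadd_cancel_l x). rewrite vadd_opp. symmetry.
  rewrite <- (vscal_1 X x) at 1. rewrite <- vscal_distr_s.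
  replace (1 + -1) with 0 by ring. apply vscal0.
Qed.

Lemma vscal_opp c x : vscal c (vopp x) = vopp (vscal c x).
Proof. rewrite !voppE, !vscal_assoc, Rmult_comm. reflexivity. Qed.

Lemma vopp_add x y : vopp (vadd x y) = vadd (vopp x) (vopp y).
Proof. rewrite !voppE. apply vscal_distr_v. Qed.

Lemma vopp_opp x : vopp (vopp x) = x.
Proof.
  rewrite !voppE, vscal_assoc. replace (-1 * -1) with 1 by ring. apply vscal_1.
Qed.

Lemma vscal_sub c x y : vscal c (vsub x y) = vsub (vscal c x) (vscal c y).
Proof. unfold vsub. rewrite vscal_distr_v, vscal_opp. reflexivity. Qed.

Lemma vsub_scal t x y : vsub x (vscal t y) = vadd x (vscal (-t) y).
Proof. unfold vsub. rewrite voppE, vscal_assoc. do 2 f_equal. ring. Qed.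

Lemma vsub_add_add (a b c d : X) : vsub (vadd a b) (vadd c d) = vadd (vsub a c) (vsub b d).
Proof.
  unfold vsub. rewrite vopp_add, <- !vadd_assoc. f_equal.
  rewrite !vadd_assoc. f_equal. apply vadd_comm.
Qed.

Lemma vsub_subKr (a u : X) : vsub a (vsub a u) = u.
Proof.
  unfold vsub. rewrite vopp_add, vopp_opp, vadd_assoc, vadd_opp, vadd0l. reflexivity.
Qed.

Lemma vsub_sub_swap (u a p : X) : vsub u (vsub a p) = vsub p (vsub a u).
Proof.
  unfold vsub. rewrite !vopp_add, !vopp_opp, vadd_assoc,
    (vadd_comm X (vadd u (vopp a)) p).
  f_equal. apply vadd_comm.
Qed.

Lemma vnorm0 : vnorm (@vzero X) = 0.
Proof. rewrite <- (vscal0 vzero), vnorm_scal, Rabs_R0. ring. Qed.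

Lemma vnorm_opp x : vnorm (vopp x) = vnorm x.
Proof. rewrite voppE, vnorm_scal, Rabs_left by lra. ring. Qed.

Lemma vnorm_sub_le x y : vnorm (vsub x y) <= vnorm x + vnorm y.
Proof. unfold vsub. rewrite <- (vnorm_opp y). apply vnorm_triangle. Qed.

Lemma vnorm_normalize x : 0 < vnorm x -> vnorm (vscal (/ vnorm x) x) = 1.
Proof.
  intro Hx. rewrite vnorm_scal, Rabs_pos_eq by (apply Rlt_le, Rinv_0_lt_compat; lra).
  field. lra.
Qed.

Lemma unit_vector_of_pos_norm x : 0 < vnorm x -> exists e : X, vnorm e = 1.
Proof. intro Hx. exists (vscal (/ vnorm x) x). now apply vnorm_normalize. Qed.

End VectorAlgebra.

Section ConvexCombinations.
Context {X : NormedSpace}.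

Lemma rsum_le n (f g : nat -> R) :
  (forall i, (i < n)%nat -> f i <= g i) -> rsum f n <= rsum g n.
Proof.
  induction n as [|n IH]; intro H; cbn [rsum]; [lra|].
  apply Rplus_le_compat; [apply IH; intros; apply H | apply H]; lia.
Qed.

Lemma rsum_mulr n (w : nat -> R) c : rsum (fun i => w i * c) n = rsum w n * c.
Proof. induction n as [|n IH]; cbn [rsum]; [ring | rewrite IH; ring]. Qed.

Lemma rsum_weighted_le n (w g : nat -> R) K :
  (forall i, (i < n)%nat -> 0 <= w i /\ g i <= K) ->
  rsum (fun i => w i * g i) n <= K * rsum w n.
Proof.
  intro H. rewrite Rmult_comm, <- rsum_mulr. apply rsum_le.
  intros i Hi. destruct (H i Hi). now apply Rmult_le_compat_l.
Qed.

Lemma rsum_weighted_lt n (w g : nat -> R) K :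
  (forall i, (i < n)%nat -> 0 <= w i /\ g i < K) -> 0 < rsum w n ->
  rsum (fun i => w i * g i) n < K * rsum w n.
Proof.
  induction n as [|n IH]; intros H Hpos; cbn [rsum] in *; [lra|].
  destruct (H n) as [Hw Hg]; [lia|].
  destruct (Rlt_or_le 0 (rsum w n)) as [Hr|Hr].
  - assert (rsum (fun i => w i * g i) n < K * rsum w n)
      by (apply IH; [intros; apply H; lia | exact Hr]).
    nra.
  - assert (rsum (fun i => w i * g i) n <= K * rsum w n).
    { apply rsum_weighted_le. intros i Hi. destruct (H i) as [? ?]; [lia | split; lra]. }
    nra.
Qed.

Lemma vsum_scal_sub n (w : nat -> R) (f : nat -> X) (c : X) :
  vsub (vsum (fun i => vscal (w i) (f i)) n) (vscal (rsum w n) c)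
  = vsum (fun i => vscal (w i) (vsub (f i) c)) n.
Proof.
  induction n as [|n IH]; cbn [vsum rsum].
  - rewrite vscal0. apply vadd_opp.
  - rewrite vscal_distr_s, vsub_add_add, IH, vscal_sub. reflexivity.
Qed.

Lemma vnorm_vsum_le n (w : nat -> R) (f : nat -> X) :
  (forall i, (i < n)%nat -> 0 <= w i) ->
  vnorm (vsum (fun i => vscal (w i) (f i)) n) <= rsum (fun i => w i * vnorm (f i)) n.
Proof.
  induction n as [|n IH]; intro H; cbn [vsum rsum].
  - rewrite vnorm0. lra.
  - eapply Rle_trans; [apply vnorm_triangle|].
    rewrite vnorm_scal, Rabs_pos_eq by (apply H; lia).
    apply Rplus_le_compat_r, IH. intros; apply H; lia.
Qed.

Lemma conv_vnorm_sub_le (T : X -> Prop) a x D :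
  conv T a -> (forall p q, T p -> T q -> vnorm (vsub p q) <= D) -> T x ->
  vnorm (vsub a x) <= D.
Proof.
  intros (n & w & p & Hp & Hw & ->) HD Hx.
  rewrite <- (vscal_1 X x), <- Hw, vsum_scal_sub.
  eapply Rle_trans; [apply vnorm_vsum_le; intros; apply Hp; auto|].
  rewrite <- (Rmult_1_r D), <- Hw. apply rsum_weighted_le.
  intros i Hi. destruct (Hp i Hi). auto.
Qed.

Lemma conv_greedy_choice (T : X -> Prop) a u :
  conv T a -> exists x, T x /\ vnorm u <= vnorm (vsub u (vsub a x)).
Proof.
  intros (n & w & p & Hp & Hw & Ha). apply NNPP. intro Hnone.
  assert (Hlt : forall i, (i < n)%nat ->
            0 <= w i /\ vnorm (vsub (p i) (vsub a u)) < vnorm u).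
  { intros i Hi. split; [apply Hp; auto|]. rewrite <- vsub_sub_swap.
    apply Rnot_le_lt. intro Hle. apply Hnone. exists (p i). split; [apply Hp|]; auto. }
  assert (Hu : u = vsum (fun i => vscal (w i) (vsub (p i) (vsub a u))) n).
  { rewrite <- vsum_scal_sub, Hw, vscal_1, <- Ha. symmetry. apply vsub_subKr. }
  assert (vnorm u <= rsum (fun i => w i * vnorm (vsub (p i) (vsub a u))) n).
  { rewrite Hu at 1. apply vnorm_vsum_le. intros; apply Hp; auto. }
  assert (rsum (fun i => w i * vnorm (vsub (p i) (vsub a u))) n < vnorm u * rsum w n)
    by (apply rsum_weighted_lt; [exact Hlt | lra]).
  rewrite Hw in *. lra.
Qed.

End ConvexCombinations.

Lemma sup_R_ub (E : R -> Prop) x : bound E -> E x -> x <= sup_R E.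
Proof.
  intros Hb Hx. unfold sup_R. destruct (excluded_middle_informative _) as [H|H].
  - destruct (proj2_sig (completeness E (proj1 H) (proj2 H))) as [Hm _]. now apply Hm.
  - exfalso. apply H. split; eauto.
Qed.

Lemma sup_R_lub (E : R -> Prop) M :
  (exists x, E x) -> (forall x, E x -> x <= M) -> sup_R E <= M.
Proof.
  intros Hne Hm. unfold sup_R. destruct (excluded_middle_informative _) as [H|H].
  - destruct (proj2_sig (completeness E (proj1 H) (proj2 H))) as [_ Hl]. apply Hl.
    intros x Hx. auto.
  - exfalso. apply H. split; [exists M; intros x Hx|]; auto.
Qed.

Section Diameter.
Context {X : NormedSpace}.
Variable S : X -> Prop.

Lemma vnorm_sub_le_diam p q : bounded_set S -> S p -> S q -> vnorm (vsub p q) <= diam S.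
Proof.
  intros [M HM] Hp Hq. apply sup_R_ub; [|exists p, q; auto].
  exists (M + M). intros r (x & y & Hx & Hy & ->).
  pose proof (vnorm_sub_le x y). pose proof (HM x Hx). pose proof (HM y Hy). lra.
Qed.

Lemma diam_ge0 : bounded_set S -> (exists s, S s) -> 0 <= diam S.
Proof.
  intros Hb [s Hs]. pose proof (vnorm_sub_le_diam s s Hb Hs Hs).
  pose proof (vnorm_nonneg X (vsub s s)). lra.
Qed.

Lemma unit_vector_of_diam_pos : (exists s, S s) -> 0 < diam S -> exists e : X, vnorm e = 1.
Proof.
  intros [s Hs] Hd. apply NNPP. intro Hnone.
  enough (diam S <= 0) by lra.
  apply sup_R_lub; [exists (vnorm (vsub s s)), s, s; auto|].
  intros r (p & q & _ & _ & ->). apply Rnot_lt_le. intro Hpos.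
  apply Hnone, (unit_vector_of_pos_norm _ Hpos).
Qed.

End Diameter.

Section ModulusOfSmoothness.
Variable X : NormedSpace.
Hypothesis Hunit : exists e : X, vnorm e = 1.

Lemma le_rho t (x y : X) : vnorm x = 1 -> vnorm y = 1 ->
  (vnorm (vadd x (vscal t y)) + vnorm (vsub x (vscal t y))) / 2 - 1 <= rho X t.
Proof.
  intros Hx Hy. apply sup_R_ub; [|exists x, y; auto].
  exists (Rabs t). intros r (x' & y' & Hx' & Hy' & ->).
  pose proof (vnorm_triangle X x' (vscal t y')). pose proof (vnorm_sub_le x' (vscal t y')).
  rewrite vnorm_scal, Hx', Hy' in *. lra.
Qed.

Lemma rho_le t M :
  (forall x y : X, vnorm x = 1 -> vnorm y = 1 ->
     (vnorm (vadd x (vscal t y)) + vnorm (vsub x (vscal t y))) / 2 - 1 <= M) ->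
  rho X t <= M.
Proof.
  destruct Hunit as [e He]. intro H. apply sup_R_lub.
  - eexists. exists e, e. eauto.
  - intros r (x & y & Hx & Hy & ->). auto.
Qed.

Lemma vnorm_add_scal_lipschitz (x y : X) t s :
  vnorm (vadd x (vscal t y)) <= vnorm (vadd x (vscal s y)) + Rabs (t - s) * vnorm y.
Proof.
  replace (vadd x (vscal t y)) with (vadd (vadd x (vscal s y)) (vscal (t - s) y)).
  - rewrite <- vnorm_scal. apply vnorm_triangle.
  - rewrite <- vadd_assoc, <- vscal_distr_s. do 2 f_equal. ring.
Qed.

Lemma rho_lipschitz t s : rho X t <= rho X s + Rabs (t - s).
Proof.
  apply rho_le. intros x y Hx Hy.
  pose proof (le_rho s x y Hx Hy). rewrite !vsub_scal in *.
  pose proof (vnorm_add_scal_lipschitz x y t s).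
  pose proof (vnorm_add_scal_lipschitz x y (-t) (-s)).
  replace (-t - - s) with (-(t - s)) in * by ring.
  rewrite Rabs_Ropp, Hy in *. lra.
Qed.

Lemma vnorm_add_scal_convex (x y : X) l t : 0 <= l <= 1 ->
  vnorm (vadd x (vscal (l * t) y)) <= (1 - l) * vnorm x + l * vnorm (vadd x (vscal t y)).
Proof.
  intro Hl.
  replace (vadd x (vscal (l * t) y))
    with (vadd (vscal (1 - l) x) (vscal l (vadd x (vscal t y)))).
  - eapply Rle_trans; [apply vnorm_triangle|].
    rewrite !vnorm_scal, !Rabs_pos_eq by lra. lra.
  - rewrite vscal_distr_v, vscal_assoc, vadd_assoc, <- vscal_distr_s.
    replace (1 - l + l) with 1 by ring. now rewrite vscal_1.
Qed.

Lemma rho_scale_le l t : 0 <= l <= 1 -> rho X (l * t) <= l * rho X t.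
Proof.
  intro Hl. apply rho_le. intros x y Hx Hy.
  pose proof (le_rho t x y Hx Hy). rewrite !vsub_scal in *.
  replace (- (l * t)) with (l * - t) by ring.
  pose proof (vnorm_add_scal_convex x y l t Hl).
  pose proof (vnorm_add_scal_convex x y l (-t) Hl).
  rewrite Hx in *. nra.
Qed.

Lemma rho_le_ratio s tau : 0 < tau -> 0 <= s <= tau -> rho X s <= s / tau * rho X tau.
Proof.
  intros Ht Hs. replace s with (s / tau * tau) at 1 by (field; lra).
  apply rho_scale_le. split.
  - apply Rle_mult_inv_pos; lra.
  - apply Rmult_le_reg_r with tau; [lra|]. field_simplify; lra.
Qed.

Lemma rho0_le : rho X 0 <= 0.
Proof.
  apply rho_le. intros x y Hx Hy. rewrite vscal0, vadd_0.
  pose proof (vnorm_sub_le x (@vzero X)). rewrite vnorm0 in *. lra.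
Qed.

Lemma abs_sub1_le_rho t : Rabs t - 1 <= rho X t.
Proof.
  destruct Hunit as [e He]. eapply Rle_trans; [|apply (le_rho t e e He He)].
  rewrite vsub_scal.
  assert (Hself : forall c, vnorm (vadd e (vscal c e)) = Rabs (1 + c)).
  { intro c. rewrite <- (vscal_1 X e) at 1. rewrite <- vscal_distr_s, vnorm_scal, He. ring. }
  rewrite !Hself.
  pose proof (Rabs_triang (1 + t) (- (1 + - t))).
  rewrite Rabs_Ropp in *. replace (1 + t + - (1 + - t)) with (2 * t) in * by ring.
  rewrite Rabs_mult, (Rabs_pos_eq 2) in * by lra. lra.
Qed.

Lemma rho_continuous s : continuity (fun t => rho X t - s).
Proof.
  intros x. unfold continuity_pt, continue_in, limit1_in, limit_in.
  intros eps Heps. exists eps. split; [lra|]. intros y [_ Hy]. cbn in *.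
  unfold R_dist in *. pose proof (rho_lipschitz x y). pose proof (rho_lipschitz y x).
  rewrite Rabs_minus_sym in H.
  apply Rle_lt_trans with (Rabs (y - x)); [|auto].
  apply Rabs_le. lra.
Qed.

Lemma rho_inv_spec s : 0 < s ->
  0 < rho_inv X s <= s + 1 /\ rho X (rho_inv X s) = s.
Proof.
  intro Hs.
  assert (Hex : exists t, 0 <= t /\ rho X t = s).
  { pose proof rho0_le. pose proof (abs_sub1_le_rho (s + 2)).
    rewrite Rabs_pos_eq in * by lra.
    destruct (IVT (fun t => rho X t - s) 0 (s + 2) (rho_continuous s))
      as [z [Hz Hrz]]; cbn beta; try lra.
    exists z. split; lra. }
  destruct (epsilon_spec (inhabits 0) (fun t => 0 <= t /\ rho X t = s) Hex) as [H0 Hr].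
  fold (rho_inv X s) in H0, Hr. split; [|exact Hr].
  pose proof rho0_le. pose proof (abs_sub1_le_rho (rho_inv X s)).
  rewrite Rabs_pos_eq in * by lra.
  destruct H0 as [H0|H0]; [lra|]. rewrite <- H0 in Hr. lra.
Qed.

End ModulusOfSmoothness.

Section SmoothnessStep.
Variable X : NormedSpace.

Lemma vnorm_add_sub_le_rho (u v : X) : 0 < vnorm u -> 0 < vnorm v ->
  vnorm (vadd u v) + vnorm (vsub u v) <= 2 * vnorm u * (1 + rho X (vnorm v / vnorm u)).
Proof.
  intros Hu Hv.
  set (x := vscal (/ vnorm u) u). set (y := vscal (/ vnorm v) v).
  set (t := vnorm v / vnorm u).
  assert (Ey : vscal t y = vscal (/ vnorm u) v).
  { unfold y, t. rewrite vscal_assoc. f_equal. field. lra. }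
  pose proof (le_rho X t x y (vnorm_normalize u Hu) (vnorm_normalize v Hv)) as G.
  rewrite Ey in G. unfold x in G.
  rewrite <- vscal_distr_v, <- vscal_sub, !vnorm_scal in G.
  rewrite Rabs_pos_eq in G by (apply Rlt_le, Rinv_0_lt_compat; lra).
  apply Rmult_le_compat_l with (r := 2 * vnorm u) in G; [|lra].
  field_simplify in G; [|lra]. lra.
Qed.

Lemma greedy_step (u v : X) D tau N :
  0 < tau -> 0 < N -> rho X tau = / N ->
  vnorm u <= vnorm (vsub u v) -> vnorm v <= D ->
  vnorm (vadd u v) <= Rmax (D / tau + D) (vnorm u + 2 * D / (tau * N)).
Proof.
  intros Ht HN Hr Huv Hv.
  pose proof (vnorm_triangle X u v). pose proof (vnorm_nonneg X v).
  assert (0 <= D / tau) by (apply Rle_mult_inv_pos; lra).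
  assert (0 <= 2 * D / (tau * N)) by (apply Rle_mult_inv_pos; nra).
  destruct (Rlt_or_le (vnorm u) (D / tau)) as [Hsmall|Hlarge];
    [eapply Rle_trans; [|apply Rmax_l]; lra|].
  eapply Rle_trans; [|apply Rmax_r].
  destruct (Req_dec (vnorm v) 0) as [Hv0|Hv0]; [lra|].
  assert (Hu : 0 < vnorm u).
  { assert (0 < D / tau) by (apply Rdiv_lt_0_compat; lra). lra. }
  assert (Hratio : 0 <= vnorm v / vnorm u <= tau).
  { split; [apply Rle_mult_inv_pos; lra|].
    apply Rmult_le_reg_r with (vnorm u); [lra|].
    apply (Rmult_le_compat_r tau) in Hlarge; [|lra].
    field_simplify; [|lra]. field_simplify in Hlarge; lra. }
  pose proof (rho_le_ratio X (unit_vector_of_pos_norm v ltac:(lra)) _ _ Ht Hratio) as Hrho.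
  rewrite Hr in Hrho.
  pose proof (vnorm_add_sub_le_rho u v Hu ltac:(lra)) as G.
  assert (2 * vnorm u * (1 + rho X (vnorm v / vnorm u))
          <= 2 * vnorm u + 2 * vnorm v / (tau * N)).
  { apply (Rmult_le_compat_l (2 * vnorm u)) in Hrho; [|lra].
    replace (2 * vnorm u * (vnorm v / vnorm u / tau * / N))
      with (2 * vnorm v / (tau * N)) in Hrho by (field; lra).
    lra. }
  assert (2 * vnorm v / (tau * N) <= 2 * D / (tau * N)).
  { apply Rmult_le_compat_r; [apply Rlt_le, Rinv_0_lt_compat; nra | lra]. }
  lra.
Qed.

End SmoothnessStep.

Section GreedySequence.
Context {X : NormedSpace}.
Variables (T : X -> Prop) (a : X).
Hypothesis Ha : conv T a.

Definition greedy_pick (u : X) : X :=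
  epsilon (inhabits vzero) (fun x => T x /\ vnorm u <= vnorm (vsub u (vsub a x))).

Lemma greedy_pick_spec u :
  T (greedy_pick u) /\ vnorm u <= vnorm (vsub u (vsub a (greedy_pick u))).
Proof.
  apply (epsilon_spec (inhabits vzero) (fun x => T x /\ _)).
  now apply conv_greedy_choice.
Qed.

Fixpoint greedy_error (k : nat) : X :=
  match k with
  | O => vzero
  | S k => vadd (greedy_error k) (vsub a (greedy_pick (greedy_error k)))
  end.

Definition greedy_seq (k : nat) : X := greedy_pick (greedy_error k).

Lemma greedy_seq_in k : T (greedy_seq k).
Proof. apply greedy_pick_spec. Qed.

Lemma greedy_errorE k : vsub (vscal (INR k) a) (vsum greedy_seq k) = greedy_error k.
Proof.
  induction k as [|k IH]; cbn [vsum greedy_error].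
  - rewrite vscal0. apply vadd_opp.
  - rewrite S_INR, vscal_distr_s, vscal_1, vsub_add_add, IH. reflexivity.
Qed.

Lemma vnorm_sub_average k : (1 <= k)%nat ->
  vnorm (vsub a (vscal (/ INR k) (vsum greedy_seq k)))
  = / INR k * vnorm (greedy_error k).
Proof.
  intro Hk. assert (1 <= INR k) by (apply (le_INR 1); auto).
  assert (Hk0 : 0 <= / INR k) by (apply Rlt_le, Rinv_0_lt_compat; lra).
  rewrite <- greedy_errorE. rewrite <- (Rabs_pos_eq _ Hk0) at 2.
  rewrite <- vnorm_scal, vscal_sub, vscal_assoc, Rinv_l, vscal_1 by lra.
  reflexivity.
Qed.

Variable D : R.
Hypothesis HD : forall p q, T p -> T q -> vnorm (vsub p q) <= D.

Lemma vnorm_sub_greedy_seq_le k : vnorm (vsub a (greedy_seq k)) <= D.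
Proof. apply (conv_vnorm_sub_le T); auto using greedy_seq_in. Qed.

Lemma greedy_error_le_linear k : vnorm (greedy_error k) <= INR k * D.
Proof.
  induction k as [|k IH]; cbn [greedy_error].
  - rewrite vnorm0. cbn. lra.
  - rewrite S_INR. pose proof (vnorm_sub_greedy_seq_le k). fold (greedy_seq k).
    pose proof (vnorm_triangle X (greedy_error k) (vsub a (greedy_seq k))). lra.
Qed.

Lemma greedy_error_le tau N : 0 < tau -> 0 < N -> rho X tau = / N ->
  forall k, vnorm (greedy_error k) <= D / tau + D + 2 * D * INR k / (tau * N).
Proof.
  intros Ht HN Hr.
  assert (HD0 : 0 <= D).
  { pose proof (vnorm_sub_greedy_seq_le 0). pose proof (vnorm_nonneg X (vsub a (greedy_seq 0))).
    lra. }
  induction k as [|k IH]; cbn [greedy_error].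
  - rewrite vnorm0. cbn [INR].
    replace (2 * D * 0 / (tau * N)) with 0 by (field; lra).
    assert (0 <= D / tau) by (apply Rle_mult_inv_pos; lra). lra.
  - eapply Rle_trans.
    + apply (greedy_step X _ _ D tau N); auto.
      * apply greedy_pick_spec.
      * apply vnorm_sub_greedy_seq_le.
    + rewrite S_INR. apply Rmax_lub.
      * assert (0 <= 2 * D * (INR k + 1) / (tau * N)).
        { apply Rle_mult_inv_pos; [pose proof (pos_INR k); nra | nra]. }
        lra.
      * replace (2 * D * (INR k + 1) / (tau * N))
          with (2 * D * INR k / (tau * N) + 2 * D / (tau * N)) by (field; lra).
        lra.
Qed.

End GreedySequence.

Lemma greedy_constant_le D tau : 0 <= D -> 0 < tau <= 2 ->
  D / tau + D + 2 * D / tau <= 2 * exp 1 ^ 2 * D / tau.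
Proof.
  intros HD Ht.
  assert (4 <= exp 1 ^ 2) by (pose proof (exp_ineq1 1 ltac:(lra)); nra).
  apply Rmult_le_reg_r with tau; [lra|]. field_simplify; nra.
Qed.

Theorem theorem1 (X : NormedSpace) (HX : complete X) (Hus : uniformly_smooth X)
  (S : X -> Prop) (HSne : exists s, S s) (HSb : bounded_set S)
  (a : X) (Ha : conv S a) :
  exists x : nat -> X, (forall i, S (x i)) /\
    forall k : nat, (1 <= k)%nat ->
      vnorm (vsub a (vscal (/ INR k) (vsum x k)))
        <= 2 * exp 1 ^ 2 / (INR k * rho_inv X (/ INR k)) * diam S.
Proof.
  exists (greedy_seq S a). split; [intro i; apply greedy_seq_in, Ha|].
  intros k Hk. rewrite vnorm_sub_average by auto.
  assert (HD : forall p q, S p -> S q -> vnorm (vsub p q) <= diam S)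
    by (intros; now apply vnorm_sub_le_diam).
  assert (Hkpos : 1 <= INR k) by (apply (le_INR 1); auto).
  assert (0 < / INR k <= 1).
  { split; [apply Rinv_0_lt_compat; lra|]. rewrite <- Rinv_1. apply Rinv_le_contravar; lra. }
  destruct (diam_ge0 S HSb HSne) as [Hpos|H0].
  - pose proof (unit_vector_of_diam_pos S HSne Hpos) as Hunit.
    destruct (rho_inv_spec X Hunit (/ INR k)) as [Htau Hrho]; [lra|].
    set (tau := rho_inv X (/ INR k)) in *.
    pose proof (greedy_error_le S a Ha (diam S) HD tau (INR k) ltac:(lra) ltac:(lra) Hrho k)
      as Hbound.
    replace (2 * diam S * INR k / (tau * INR k)) with (2 * diam S / tau) in Hbound
      by (field; lra).
    pose proof (greedy_constant_le (diam S) tau ltac:(lra) ltac:(lra)).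
    replace (2 * exp 1 ^ 2 / (INR k * tau) * diam S)
      with (/ INR k * (2 * exp 1 ^ 2 * diam S / tau)) by (field; lra).
    apply Rmult_le_compat_l; lra.
  - pose proof (greedy_error_le_linear S a Ha (diam S) HD k).
    rewrite <- H0 in *. rewrite Rmult_0_r in *.
    pose proof (vnorm_nonneg X (greedy_error S a k)). nra.
Qed.
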